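(* Let $M_G$ be an $n$-vertex mixed graph with underlying graph $G$, and let $\Delta(G)$ be the maximum degree of $G$. Then $\rho(M_G)\le \Delta(G)$. Moreover, when $G$ is connected, equality $\rho(M_G)=\Delta(G)$ holds if and only if $G$ is $\Delta(G)$-regular and $V(M_G)$ can be partitioned into six (possibly empty) parts $V_1,V_{-1},V_{\omega},V_{\bar\omega},V_{-\omega},V_{-\bar\omega}$ (indexed by $\mathbb{T}_6=\{1,-1,\omega,\bar\omega,-\omega,-\bar\omega\}$) such that one of the following holds: (i) for every $j\in\mathbb{T}_6$ the induced mixed subgraph $M_G[V_j]$ contains only undirected edges, and every edge of $M_G$ not lying inside some $M_G[V_j]$ is an arc $\overrightarrow{uv}$ with $u\in V_j$ and $v\in V_{\bar\omega\cdot j}$ for some $j\in\mathbb{T}_6$; (ii) for every $j\in\mathbb{T}_6$ the set $V_j$ is independent in $G$; every undirected edge $\{u,v\}$ of $M_G$ satisfies $u\in V_j$, $v\in V_{-j}$ for some $j\in\mathbb{T}_6$; and every arc $\overrightarrow{uv}$ of $M_G$ satisfies $u\in V_j$, $v\in V_{-\bar\omega\cdot j}$ for some $j\in\mathbb{T}_6$.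
   Context: A mixed graph $M_G$ is obtained from a finite simple graph $G$ (its underlying graph) by orienting the edges of some subset of $E(G)$; oriented edges are arcs $\overrightarrow{uv}$, the others are undirected edges $\{u,v\}$. Let $\omega=\frac{1+\mathbf{i}\sqrt3}{2}$. The Hermitian adjacency matrix of the second kind $N(M_G)$ is indexed by the vertices, with $(u,v)$-entry $\omega$ if $\overrightarrow{uv}$ is an arc, $\bar\omega$ if $\overrightarrow{vu}$ is an arc, $1$ if $\{u,v\}$ is an undirected edge, and $0$ otherwise. Its eigenvalues are the eigenvalues of $M_G$; with $\lambda_1\ge\dots\ge\lambda_n$ these eigenvalues, the spectral radius is $\rho(M_G)=\max\{|\lambda_1|,|\lambda_n|\}$. $\mathbb{T}_6$ denotes the group of sixth roots of unity. *)

From mathcomp Require Import all_boot all_order all_algebra all_field.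
Set Implicit Arguments. Unset Strict Implicit. Unset Printing Implicit Defensive.
Import Order.TTheory GRing.Theory Num.Theory.
Local Open Scope ring_scope.

(* A mixed graph on vertex set 'I_n:
   [e] is the adjacency of the underlying simple graph G (symmetric, irreflexive),
   [arc u v] means the edge {u,v} is oriented as the arc u -> v. *)
Definition simple_graph n (e : rel 'I_n) : Prop :=
  (forall u v, e u v = e v u) /\ (forall u, ~~ e u u).

Definition mixed_graph n (e arc : rel 'I_n) : Prop :=
  simple_graph e /\ (forall u v, arc u v -> e u v) /\
  (forall u v, arc u v -> ~~ arc v u).

Definition undirected_edge n (e arc : rel 'I_n) (u v : 'I_n) : bool :=
  [&& e u v, ~~ arc u v & ~~ arc v u].

Definition omega : algC := (1 + 'i * sqrtC 3) / 2.

Definition T6 : seq algC := [:: 1; -1; omega; omega^*; - omega; - omega^*].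

Definition Nmx n (e arc : rel 'I_n) : 'M[algC]_n :=
  \matrix_(u, v) (if arc u v then omega
                  else if arc v u then omega^*
                  else if e u v then 1 else 0).

Definition eigenvalues n (A : 'M[algC]_n) : seq algC :=
  sval (closed_field_poly_normal (char_poly A)).

Definition spectral_radius n (A : 'M[algC]_n) : algC :=
  \big[Num.max/0]_(z <- eigenvalues A) `|z|.

Definition deg n (e : rel 'I_n) (v : 'I_n) : nat := #|[set u | e v u]|.

Definition max_degree n (e : rel 'I_n) : nat := \max_(v < n) deg e v.

Definition regular n (e : rel 'I_n) (k : nat) : Prop := forall v, deg e v = k.

Definition connected n (e : rel 'I_n) : Prop := forall u v, connect e u v.

(* A partition of the vertices into the six parts V_j (j in T_6) is given by a
   labelling p with p v \in T6; V_j = [set v | p v == j]. *)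
Definition T6_labelling n (p : 'I_n -> algC) : Prop := forall v, p v \in T6.

Definition cond_i n (e arc : rel 'I_n) (p : 'I_n -> algC) : Prop :=
  (forall u v, p u = p v -> ~~ arc u v) /\
  (forall u v, e u v -> p u <> p v ->
     (arc u v /\ p v = omega^* * p u) \/ (arc v u /\ p u = omega^* * p v)).

Definition cond_ii n (e arc : rel 'I_n) (p : 'I_n -> algC) : Prop :=
  (forall u v, p u = p v -> ~~ e u v) /\
  (forall u v, undirected_edge e arc u v -> p v = - p u) /\
  (forall u v, arc u v -> p v = - omega^* * p u).

From mathcomp Require Import all_boot all_order all_algebra all_field.
From mathcomp Require Import ring.
Set Implicit Arguments. Unset Strict Implicit. Unset Printing Implicit Defensive.
Import Order.TTheory GRing.Theory Num.Theory.
Local Open Scope ring_scope.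

(* Let N x = b x with x != 0 and let w maximise |x w|.  The triangle inequality gives
   |b| |x w| <= deg w |x w| <= Delta |x w|, hence rho <= Delta.  If |b| = Delta, all these
   inequalities are equalities: deg w = Delta and N w u x u = mu x w for every neighbour u,
   with |mu| = 1, so |x u| = |x w|.  By connectivity this holds at every vertex, hence G is
   regular and x switches N to mu times the adjacency matrix of G; Hermitian symmetry forces
   mu^2 = 1.  The entries of N are sixth roots of unity, so x normalised at one vertex takes
   its values in T6, and mu = 1, mu = -1 are exactly conditions (i), (ii).  Conversely such a
   labelling is an eigenvector for the eigenvalue mu Delta. *)

Lemma omega_sqr : omega ^+ 2 = omega - 1.
Proof.
have i3 : ('i * sqrtC 3) ^+ 2 = - 3 :> algC by rewrite exprMn sqrCi sqrtCK mulN1r.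
apply/eqP; rewrite -subr_eq0; apply/eqP.
transitivity ((('i * sqrtC 3) ^+ 2 + 3) / 4 : algC); first by rewrite /omega; field.
by rewrite i3 addNr mul0r.
Qed.

Lemma conj_omega : omega^* = 1 - omega.
Proof.
have r3 : (sqrtC 3 : algC)^* = sqrtC 3 by apply/CrealP/ger0_real; rewrite sqrtC_ge0.
rewrite /omega fmorph_div rmorphD rmorphM /= conjCi r3 rmorph1 rmorph_nat.
by field.
Qed.

Lemma omega_add_conj : omega + omega^* = 1.
Proof. by rewrite conj_omega addrC subrK. Qed.

Lemma omega_mul_conj : omega * omega^* = 1.
Proof. by rewrite conj_omega mulrBr mulr1 -expr2 omega_sqr opprB addrC subrK. Qed.

Lemma omega_exp3 : omega ^+ 3 = -1.
Proof. by rewrite exprS omega_sqr mulrBr mulr1 -expr2 omega_sqr addrAC subrr add0r. Qed.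

Lemma omega_neq1 : omega != 1.
Proof.
apply/eqP => om1; move: omega_exp3; rewrite om1 expr1n => /eqP.
by rewrite -addr_eq0 (pnatr_eq0 _ 2).
Qed.

Lemma omega_neqN1 : omega != -1.
Proof.
apply/eqP => omN1; move: omega_sqr; rewrite omN1 sqrrN expr1n => h.
have three0 : (3 : algC) = 0.
  by transitivity (1 - (-1 - 1) : algC); [ring | rewrite -h subrr].
by move/eqP: three0; rewrite pnatr_eq0.
Qed.

Lemma conj_omega_neqN1 : omega^* != -1.
Proof. by apply: contraNneq omega_neqN1 => h; rewrite -[omega]conjCK h rmorphN rmorph1. Qed.

Lemma T6E z : (z \in T6) = (z ^+ 6 == 1).
Proof.
have omega6 : omega ^+ 6 = 1 by rewrite -[6%N]/(3 * 2)%N exprM omega_exp3 sqrrN expr1n.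
have even6 t : (- t) ^+ 6 = t ^+ 6 by rewrite -[6%N]/(2 * 3)%N !exprM sqrrN.
apply/idP/idP.
  rewrite !inE => /or3P[/eqP-> | /eqP-> | /or4P[] /eqP->]; apply/eqP;
    by rewrite ?even6 ?expr1n -?rmorphXn ?omega6 ?rmorph1.
have [sum prod] := (omega_add_conj, omega_mul_conj).
have roots_omega : (z - omega) * (z - omega^*) = z ^+ 2 - z + 1.
  transitivity (z ^+ 2 - (omega + omega^*) * z + omega * omega^*); first by ring.
  by rewrite sum prod mul1r.
have roots_Nomega : (z + omega) * (z + omega^*) = z ^+ 2 + z + 1.
  transitivity (z ^+ 2 + (omega + omega^*) * z + omega * omega^*); first by ring.
  by rewrite sum prod mul1r.
have factor6 : z ^+ 6 - 1 =
    (z - 1) * (z + 1) * ((z - omega) * (z - omega^*)) * ((z + omega) * (z + omega^*)).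
  by rewrite roots_omega roots_Nomega; ring.
by rewrite -subr_eq0 factor6 !mulf_eq0 !subr_eq0 !addr_eq0 !inE -!orbA.
Qed.

Lemma T6M a b : a \in T6 -> b \in T6 -> a * b \in T6.
Proof. by rewrite !T6E exprMn => /eqP-> /eqP->; rewrite mulr1. Qed.

Lemma T6_conj a : a \in T6 -> a^* \in T6.
Proof. by rewrite !T6E -rmorphXn => /eqP->; rewrite rmorph1. Qed.

Lemma T6_neq0 a : a \in T6 -> a != 0.
Proof. by rewrite T6E; apply: contraTneq => ->; rewrite expr0n eq_sym oner_eq0. Qed.

Lemma sqr_eq1_T6 a : a ^+ 2 = 1 -> a \in T6.
Proof. by rewrite T6E -[6%N]/(2 * 3)%N exprM => ->; rewrite expr1n. Qed.

Lemma T6_norm a : a \in T6 -> `|a| = 1.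
Proof.
rewrite T6E => /eqP a6; apply/eqP.
by rewrite -(pexpr_eq1 (n := 6)) // -normrX a6 normr1.
Qed.

Lemma char_poly_trmx (R : comNzRingType) n (A : 'M[R]_n) : char_poly A^T = char_poly A.
Proof. by rewrite /char_poly /char_poly_mx -det_tr linearB /= tr_scalar_mx -map_trmx trmxK. Qed.

Lemma mem_eigenvalues n (A : 'M[algC]_n) z : (z \in eigenvalues A) = root (char_poly A) z.
Proof.
rewrite /eigenvalues; case: closed_field_poly_normal => r /= ->.
by rewrite rootZ ?root_prod_XsubC // (monicP (char_poly_monic A)) oner_eq0.
Qed.

Definition eigenfun n (A : 'M[algC]_n) (b : algC) (x : 'I_n -> algC) : Prop :=
  forall w, \sum_u A w u * x u = b * x w.

Lemma eigenvaluesP n (A : 'M[algC]_n) z :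
  reflect (exists2 x, eigenfun A z x & exists w, x w != 0) (z \in eigenvalues A).
Proof.
rewrite mem_eigenvalues -char_poly_trmx -eigenvalue_root_char.
apply: (iffP eigenvalueP) => [[v vA v_neq0] | [x xA [w0 xw_neq0]]].
  exists (v 0); last first.
    apply/existsP; apply: contraNT v_neq0; rewrite negb_exists => /forallP v0.
    by apply/eqP/rowP => u; rewrite mxE; apply/eqP/negbNE/v0.
  move=> w; have /rowP/(_ w) := vA; rewrite !mxE => <-.
  by apply: eq_bigr => u _; rewrite mxE mulrC.
exists (\row_u x u).
  by apply/rowP => w; rewrite !mxE -(xA w); apply: eq_bigr => u _; rewrite !mxE mulrC.
by apply: contra_neq xw_neq0 => /rowP/(_ w0); rewrite !mxE.
Qed.

Lemma bigmax_norm_ge0 (s : seq algC) : 0 <= \big[Num.max/0]_(z <- s) `|z|.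
Proof. by elim/big_ind: _ => // x y x0 y0; rewrite maxEle; case: ifP. Qed.

Lemma norm_le_spectral_radius n (A : 'M[algC]_n) z :
  z \in eigenvalues A -> `|z| <= spectral_radius A.
Proof.
rewrite /spectral_radius; elim: (eigenvalues A) => // y s IHs.
rewrite inE big_cons maxEle => /predU1P[-> | /IHs z_le]; first by case: ifP.
case: ifPn => // /negbTE r_lt; apply: (le_trans z_le).
by rewrite ltW // real_ltNge ?r_lt ?ger0_real ?bigmax_norm_ge0.
Qed.

Lemma spectral_radius_attained n (A : 'M[algC]_n) :
  0 < spectral_radius A -> exists2 z, z \in eigenvalues A & `|z| = spectral_radius A.
Proof.
rewrite /spectral_radius big_seq.
apply: (big_ind (fun r => 0 < r -> exists2 z, z \in eigenvalues A & `|z| = r)).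
- by rewrite ltxx.
- by move=> a b Ha Hb /=; rewrite maxEle; case: ifP.
- by move=> z zA _; exists z.
Qed.

Section Degrees.
Variables (n : nat) (e : rel 'I_n).

Lemma deg_le_max_degree w : (deg e w <= max_degree e)%N.
Proof. exact: leq_bigmax. Qed.

Lemma sumr_adj w (c : algC) : \sum_u (e w u)%:R * c = (deg e w)%:R * c.
Proof.
rewrite -mulr_suml /deg cardsE -sumr_const; congr (_ * _).
by rewrite [RHS]big_mkcond; apply: eq_bigr => u _; rewrite unfold_in; case: (e w u).
Qed.

Lemma max_degree_gt0 : (0 < max_degree e)%N <-> exists w u, e w u.
Proof.
split=> [D_gt0 | [w [u ewu]]].
  case: (pickP (fun w => 0 < deg e w)%N) => [w | deg0].
    by rewrite /deg card_gt0 => /set0Pn[u]; rewrite inE; exists w, u.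
  suff : (max_degree e <= 0)%N by rewrite leqNgt D_gt0.
  by apply/bigmax_leqP => w _; rewrite leqNgt deg0.
apply: leq_trans (deg_le_max_degree w).
by rewrite /deg card_gt0; apply/set0Pn; exists u; rewrite inE.
Qed.

End Degrees.

(* On the edges of e, diag(p)^-1 A diag(p) coincides with mu times the adjacency matrix. *)
Definition balanced n (e : rel 'I_n) (A : 'M[algC]_n) (mu : algC) (p : 'I_n -> algC) :=
  forall w u, e w u -> A w u * p u = mu * p w.

Lemma balanced_scale n (e : rel 'I_n) A mu p (c : algC) :
  balanced e A mu p -> balanced e A mu (fun w => p w * c).
Proof. by move=> pA w u ewu; rewrite mulrA pA // mulrA. Qed.

Lemma exists_max_norm n (x : 'I_n -> algC) w1 :
  x w1 != 0 -> exists w, 0 < `|x w| /\ forall u, `|x u| <= `|x w|.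
Proof.
move=> xw1; have [w _ w_max] := real_arg_maxP (i0 := w1) (P := predT) (F := fun w => `|x w|) isT
  (fun w _ => normr_real (x w)).
exists w; split=> [|u]; last exact: w_max.
by apply: lt_le_trans (w_max w1 isT); rewrite normr_gt0.
Qed.

Section HermitianGain.
Variables (n : nat) (e : rel 'I_n) (A : 'M[algC]_n).
Hypothesis normA : forall w u, `|A w u| = (e w u)%:R.
Hypothesis adjA : forall w u, (A w u)^* = A u w.
Local Notation D := (max_degree e).

Lemma edge_sym : symmetric e.
Proof.
move=> w u; have /eqP : (e w u)%:R = (e u w)%:R :> algC by rewrite -!normA -adjA norm_conjC.
by rewrite eqr_nat; case: (e w u) (e u w) => [] [].
Qed.

Lemma gain_eq0 w u : ~~ e w u -> A w u = 0.
Proof. by move=> /negbTE ewu; apply/normr0_eq0; rewrite normA ewu. Qed.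

Lemma gain_unit w u : e w u -> (A w u)^* * A w u = 1.
Proof. by move=> ewu; rewrite -normCKC normA ewu expr1n. Qed.

Lemma eigen_at_max_norm_le b x w : eigenfun A b x -> (forall u, `|x u| <= `|x w|) ->
  `|b| * `|x w| <= (deg e w)%:R * `|x w|.
Proof.
move=> xA x_le; rewrite -normrM -xA -sumr_adj.
apply: le_trans (ler_norm_sum _ _ _) _; apply: ler_sum => u _.
by rewrite normrM normA ler_wpM2l.
Qed.

Lemma norm_eigenvalue_le_max_degree b x w1 : eigenfun A b x -> x w1 != 0 -> `|b| <= D%:R.
Proof.
move=> xA /exists_max_norm[w [x_gt0 x_le]].
rewrite -(ler_pM2r x_gt0); apply: le_trans (eigen_at_max_norm_le xA x_le) _.
by rewrite ler_pM2r // ler_nat deg_le_max_degree.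
Qed.

Lemma norm_balanced_edge mu p w u :
  `|mu| = 1 -> e w u -> A w u * p u = mu * p w -> `|p u| = `|p w|.
Proof. by move=> mu1 ewu /(congr1 Num.norm); rewrite !normrM normA ewu mu1 !mul1r. Qed.

Lemma eigen_at_max_balanced b x w : eigenfun A b x -> (forall u, `|x u| <= `|x w|) ->
  x w != 0 -> `|b| = D%:R -> (0 < D)%N ->
  deg e w = D /\ forall u, e w u -> A w u * x u = b / D%:R * x w.
Proof.
move=> xA x_le xw bD D_gt0; set mu := b / D%:R; set M := `|x w|.
have M_gt0 : 0 < M by rewrite normr_gt0.
have mu1 : `|mu| = 1 by rewrite normf_div bD normr_nat divff // pnatr_eq0 -lt0n.
have degD : deg e w = D.
  apply/eqP; rewrite -(eqr_nat algC) eq_le ler_nat deg_le_max_degree /=.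
  by rewrite -(ler_pM2r M_gt0) -bD eigen_at_max_norm_le.
split=> // u ewu.
have muxM : `|mu * x w| = M by rewrite normrM mu1 mul1r.
have c_neq0 : (mu * x w)^* != 0 by rewrite conjC_eq0 -normr_eq0 muxM gt_eqF.
pose F v := A w v * x v * (mu * x w)^*; pose G v := (e w v)%:R * M ^+ 2.
have F_le_G v : predT v -> `|F v| <= G v.
  move=> _; rewrite /F /G !normrM norm_conjC muxM normA expr2 mulrA.
  by apply: ler_wpM2r; [exact: ltW | apply: ler_wpM2l; [exact: ler0n | exact: x_le]].
have sum_F_G : \sum_(v | predT v) F v = \sum_(v | predT v) G v.
  have b_mu : b = mu * D%:R by rewrite /mu divfK // pnatr_eq0 -lt0n.
  by rewrite -mulr_suml xA /G sumr_adj degD b_mu -muxM normCK; ring.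
(* the equality case of the triangle inequality for the terms of (A x) w * (mu x w)^* *)
apply: (mulIf c_neq0); rewrite [RHS]mulrC -normCKC muxM.
by have := normC_sum_upper F_le_G sum_F_G (i := u) isT; rewrite /F /G ewu mul1r.
Qed.

Lemma eigen_extremal b x w1 : connected e -> eigenfun A b x -> x w1 != 0 ->
  `|b| = D%:R -> (0 < D)%N ->
  [/\ regular e D, forall w, x w != 0 & balanced e A (b / D%:R) x].
Proof.
move=> conn xA xw1 bD D_gt0; have [w0 [M_gt0 x_le]] := exists_max_norm xw1.
have mu1 : `|b / D%:R| = 1 by rewrite normf_div bD normr_nat divff // pnatr_eq0 -lt0n.
have x_max w : `|x w| = `|x w0| -> forall u, `|x u| <= `|x w| by move=> ->.
have x_neq0 w : `|x w| = `|x w0| -> x w != 0.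
  by move=> xw; rewrite -normr_eq0 xw gt_eqF.
have normx w : `|x w| = `|x w0|.
  have closedM : closed e [pred v | `|x v| == `|x w0|].
    apply: (intro_closed (sym_connect_sym edge_sym)) => v v' evv'; rewrite !inE => /eqP xv.
    have [_ bal] := eigen_at_max_balanced xA (x_max v xv) (x_neq0 v xv) bD D_gt0.
    by rewrite (norm_balanced_edge mu1 evv' (bal v' evv')) xv.
  by have := closed_connect closedM (conn w0 w); rewrite !inE eqxx => /esym/eqP.
have at_max w := eigen_at_max_balanced xA (x_max w (normx w)) (x_neq0 w (normx w)) bD D_gt0.
by split=> [w | w | w u]; [exact: (at_max w).1 | exact: x_neq0 | exact: (at_max w).2].
Qed.

Lemma balanced_step mu p w u : balanced e A mu p -> e w u -> p u = (A w u)^* * (mu * p w).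
Proof. by move=> pA ewu; rewrite -(pA w u ewu) mulrA gain_unit // mul1r. Qed.

Lemma balanced_sqr mu p w u : balanced e A mu p -> e w u -> p u != 0 -> mu ^+ 2 = 1.
Proof.
move=> pA ewu pu_neq0.
have back : (A w u)^* * p w = mu * p u by rewrite adjA; apply: pA; rewrite edge_sym.
have := balanced_step pA ewu; rewrite mulrCA back mulrA -expr2 => pu_eq.
by apply: (mulIf pu_neq0); rewrite mul1r -pu_eq.
Qed.

Lemma balanced_eigenfun mu p : regular e D -> balanced e A mu p -> eigenfun A (mu * D%:R) p.
Proof.
move=> reg pA w; transitivity (\sum_u (e w u)%:R * (mu * p w)).
  apply: eq_bigr => u _; have [ewu | /gain_eq0->] := boolP (e w u).
    by rewrite pA // mul1r.
  by rewrite !mul0r.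
by rewrite sumr_adj reg mulrCA mulrA.
Qed.

Lemma spectral_radius_le_max_degree : spectral_radius A <= D%:R.
Proof.
rewrite /spectral_radius big_seq; apply: bigmax_le => [|z /eigenvaluesP[x xA [w xw]]].
  exact: ler0n.
exact: norm_eigenvalue_le_max_degree xA xw.
Qed.

Lemma spectral_radius_eq_max_degree : connected e ->
  spectral_radius A = D%:R <->
  regular e D /\ exists mu p, [/\ mu ^+ 2 = 1, forall w, p w != 0 & balanced e A mu p].
Proof.
move=> conn; have [D0 | D_gt0] := posnP D.
  have no_edge w u : ~~ e w u.
    apply/negP => ewu; suff : (0 < D)%N by rewrite D0.
    by apply/max_degree_gt0; exists w, u.
  split=> [_ | _].
    split=> [w | ]; first by apply/eqP; rewrite eqn_leq deg_le_max_degree D0.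
    exists 1, (fun=> 1); split=> [|w|w u ewu]; rewrite ?expr1n ?oner_neq0 //.
    by have := no_edge w u; rewrite ewu.
  by apply/eqP; rewrite eq_le spectral_radius_le_max_degree D0 bigmax_norm_ge0.
split=> [rhoD | [reg [mu [p [mu_sqr p_neq0 pA]]]]].
  have [z zA zD] : exists2 z, z \in eigenvalues A & `|z| = spectral_radius A.
    by apply: spectral_radius_attained; rewrite rhoD ltr0n.
  case/eigenvaluesP: zA => x xA [w1 xw1].
  have [reg x_neq0 xA_bal] := eigen_extremal conn xA xw1 (etrans zD rhoD) D_gt0.
  split=> //; exists (z / D%:R), x; split=> //.
  have [w [u ewu]] := proj1 (max_degree_gt0 e) D_gt0.
  exact: balanced_sqr xA_bal ewu (x_neq0 u).
apply/eqP; rewrite eq_le spectral_radius_le_max_degree /=.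
have [w _] := proj1 (max_degree_gt0 e) D_gt0.
have mu_norm : `|mu| = 1.
  by move/eqP: mu_sqr; rewrite sqrf_eq1 => /orP[] /eqP->; rewrite ?normrN normr1.
have /norm_le_spectral_radius : mu * D%:R \in eigenvalues A.
  by apply/eigenvaluesP; exists p; [exact: balanced_eigenfun | exists w].
by rewrite normrM mu_norm mul1r normr_nat.
Qed.

End HermitianGain.

Section MixedGraph.
Variables (n : nat) (e arc : rel 'I_n).
Hypothesis mixed : mixed_graph e arc.
Local Notation N := (Nmx e arc).

Let e_sym : symmetric e. Proof. by case: mixed => [[]]. Qed.
Let arc_edge w u : arc w u -> e w u. Proof. by case: mixed => _ [/(_ w u)]. Qed.
Let arc_asym w u : arc w u -> ~~ arc u w. Proof. by case: mixed => _ [_ /(_ w u)]. Qed.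

Lemma Nmx_arc w u : arc w u -> N w u = omega.
Proof. by move=> awu; rewrite mxE awu. Qed.

Lemma Nmx_arc_rev w u : arc u w -> N w u = omega^*.
Proof. by move=> auw; rewrite mxE auw (negbTE (arc_asym auw)). Qed.

Lemma Nmx_undirected w u : undirected_edge e arc w u -> N w u = 1.
Proof. by case/and3P=> ewu nawu nauw; rewrite mxE (negbTE nawu) (negbTE nauw) ewu. Qed.

Lemma Nmx_eq0 w u : ~~ e w u -> N w u = 0.
Proof.
move=> /negbTE ewu; rewrite mxE ewu.
by rewrite (contraFF (@arc_edge w u)) // (contraFF (@arc_edge u w)) // e_sym.
Qed.

Variant Nmx_edge_spec w u : algC -> Prop :=
  | NmxArc of arc w u : Nmx_edge_spec w u omega
  | NmxArcRev of arc u w : Nmx_edge_spec w u omega^*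
  | NmxUndirected of undirected_edge e arc w u : Nmx_edge_spec w u 1.

Lemma NmxP w u : e w u -> Nmx_edge_spec w u (N w u).
Proof.
move=> ewu; have [awu | nawu] := boolP (arc w u); first by rewrite Nmx_arc //; constructor.
have [auw | nauw] := boolP (arc u w); first by rewrite Nmx_arc_rev //; constructor.
have und : undirected_edge e arc w u by apply/and3P.
by rewrite Nmx_undirected //; constructor.
Qed.

Lemma Nmx_T6 w u : e w u -> N w u \in T6.
Proof. by case/NmxP; rewrite !inE eqxx ?orbT. Qed.

Lemma Nmx_neqN1 w u : e w u -> N w u != -1.
Proof.
case/NmxP=> _; rewrite ?omega_neqN1 ?conj_omega_neqN1 //.
by rewrite gt_eqF // (lt_trans (ltrN10 _) ltr01).
Qed.

Lemma norm_Nmx w u : `|N w u| = (e w u)%:R.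
Proof.
have [ewu | newu] := boolP (e w u); first exact/T6_norm/Nmx_T6.
by rewrite Nmx_eq0 // normr0.
Qed.

Lemma Nmx_adj w u : (N w u)^* = N u w.
Proof.
have [ewu | newu] := boolP (e w u); last by rewrite !Nmx_eq0 ?rmorph0 // e_sym.
case/NmxP: ewu => [awu | auw | und].
- by rewrite Nmx_arc_rev.
- by rewrite conjCK Nmx_arc.
- rewrite rmorph1 Nmx_undirected //.
  by case/and3P: und => ewu *; apply/and3P; rewrite e_sym.
Qed.

Lemma T6_labelling_of_balanced mu p w1 : connected e -> mu ^+ 2 = 1 ->
  balanced e N mu p -> p w1 \in T6 -> T6_labelling p.
Proof.
move=> conn mu_sqr pN pw1 w.
have T6_step v v' : e v v' -> p v \in T6 -> p v' \in T6.
  move=> evv' pv; rewrite (balanced_step norm_Nmx pN evv').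
  by apply: T6M; [exact/T6_conj/Nmx_T6 | apply: T6M pv; exact: sqr_eq1_T6].
have closedT6 : closed e [pred v | p v \in T6].
  by apply: (intro_closed (sym_connect_sym e_sym)) => v v'; apply: T6_step.
by rewrite -[_ \in T6]/(w \in [pred v | p v \in T6]) -(closed_connect closedT6 (conn w1 w)).
Qed.

Lemma cond_i_balanced p : (forall w, p w != 0) -> cond_i e arc p <-> balanced e N 1 p.
Proof.
move=> p_neq0; split=> [[same_part cross] w u ewu | pN].
  rewrite mul1r; have [pwu | pwu] := eqVneq (p w) (p u).
    case/NmxP: ewu => [awu | auw | _]; last by rewrite mul1r.
    - by have := same_part w u pwu; rewrite awu.
    - by have := same_part u w (esym pwu); rewrite auw.
  case: (cross w u ewu (elimN eqP pwu)) => [[awu ->] | [auw ->]].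
    by rewrite Nmx_arc // mulrA omega_mul_conj mul1r.
  by rewrite Nmx_arc_rev.
split=> [u v puv | u v euv puv].
  apply/negP => auv; have := pN u v (arc_edge auv); rewrite Nmx_arc // mul1r puv => h.
  by move/eqP: omega_neq1; apply; apply: (mulIf (p_neq0 v)); rewrite mul1r.
move: (pN u v euv); case/NmxP: euv => [auv | avu | _]; rewrite !mul1r => h.
- by left; split=> //; rewrite -h mulrA [omega^* * _]mulrC omega_mul_conj mul1r.
- by right; split.
- by case: puv; rewrite h.
Qed.

Lemma cond_ii_balanced p : (forall w, p w != 0) -> cond_ii e arc p <-> balanced e N (-1) p.
Proof.
move=> p_neq0; split=> [[indep [und arcs]] w u ewu | pN].
  rewrite mulN1r; case/NmxP: (ewu) => [awu | auw | uwu].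
  - by rewrite (arcs _ _ awu) mulrA mulrN omega_mul_conj mulN1r.
  - by rewrite (arcs _ _ auw) mulNr opprK.
  - by rewrite mul1r (und _ _ uwu).
split=> [u v puv | ]; last split=> [u v uv | u v auv].
- apply/negP => euv; have := pN u v euv; rewrite puv mulN1r => h.
  by move/eqP: (Nmx_neqN1 euv); apply; apply: (mulIf (p_neq0 v)); rewrite mulN1r.
- have [euv _ _] := and3P uv; have := pN u v euv.
  by rewrite Nmx_undirected // mul1r mulN1r.
- have := pN u v (arc_edge auv); rewrite Nmx_arc // mulN1r => h.
  have -> : p u = - (omega * p v) by rewrite h opprK.
  by rewrite mulNr mulrN opprK mulrA [omega^* * _]mulrC omega_mul_conj mul1r.
Qed.

Lemma balanced_iff_T6_labelling : connected e ->
  (exists mu p, [/\ mu ^+ 2 = 1, forall w, p w != 0 & balanced e N mu p]) <->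
  exists p, T6_labelling p /\ (cond_i e arc p \/ cond_ii e arc p).
Proof.
move=> conn; split=> [[mu [p [mu_sqr p_neq0 pN]]] | [p [pT6 cond]]].
  have [q [qT6 qN]] : exists q, T6_labelling q /\ balanced e N mu q.
    have [w1 _ | no_vertex] := pickP (@predT 'I_n); last first.
      by exists p; split=> // w; have := no_vertex w.
    have qN := balanced_scale (p w1)^-1 pN.
    exists (fun w => p w / p w1); split=> //.
    by apply: (T6_labelling_of_balanced (w1 := w1) conn mu_sqr qN); rewrite divff // inE eqxx.
  have q_neq0 w := T6_neq0 (qT6 w).
  exists q; split=> //; move/eqP: mu_sqr; rewrite sqrf_eq1 => /orP[] /eqP mu_eq.
  - by left; apply/(cond_i_balanced q_neq0); rewrite -mu_eq.
  - by right; apply/(cond_ii_balanced q_neq0); rewrite -mu_eq.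
have p_neq0 w := T6_neq0 (pT6 w).
case: cond => [/(cond_i_balanced p_neq0) | /(cond_ii_balanced p_neq0)] pN.
  by exists 1, p; rewrite expr1n.
by exists (-1), p; rewrite sqrrN expr1n.
Qed.

End MixedGraph.

Theorem theorem3p1 (n : nat) (e arc : rel 'I_n) :
  mixed_graph e arc ->
  spectral_radius (Nmx e arc) <= (max_degree e)%:R /\
  (connected e ->
   (spectral_radius (Nmx e arc) = (max_degree e)%:R <->
    regular e (max_degree e) /\
    exists p : 'I_n -> algC,
      T6_labelling p /\ (cond_i e arc p \/ cond_ii e arc p))).
Proof.
move=> mixed; have [normN adjN] := (norm_Nmx mixed, Nmx_adj mixed).
split=> [|conn]; first exact: spectral_radius_le_max_degree normN.
rewrite spectral_radius_eq_max_degree //.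
exact: and_iff_compat_l (balanced_iff_T6_labelling mixed conn).
Qed.
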